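(* Let $V,E,(v_i),\tau$ and the geodesic graphs $\mathbb{G}_n$ be as in the context, and let $\mathbb{P}$ admit geodesics. Then: (1) almost surely, every finite directed path in $\mathbb{G}_n$ is a geodesic, and it is a subpath of a geodesic ending in $v_n$; (2) if moreover $\mathbb{P}$ has unique passage times, then almost surely each $x\in V\setminus\{v_n\}$ has out-degree $1$ in $\mathbb{G}_n$, and, viewed as an undirected graph, $\mathbb{G}_n$ has no circuits.
   Context: $V\subseteq\mathbb{Z}^2$ infinite, connected, with infinite connected complement; $E$ the nearest-neighbour edges inside $V$; $v_i$ ($i\in\mathbb{Z}$) are the endpoints in $V$ of the edges $e_i$ dual to a fixed doubly infinite self-avoiding dual path $(e_i^* )$ whose removal separates $(V,E)$ as a component of $\mathbb{Z}^2$. $\mathbb{P}$ is a Borel probability on $[0,\infty)^E$; $\tau(\gamma)=\sum_{e\in\gamma}\omega_e$, $\tau(x,y)$ the infimum over paths from $x$ to $y$ in $(V,E)$; a geodesic attains it. $\mathbb{P}$ admits geodesics if for all $x,y\in V$ a geodesic from $x$ to $y$ exists a.s.; $\mathbb{P}$ has unique passage times if a.s. no two distinct nonempty edge paths have equal passage time. $\mathbb{G}_n$ is the directed graph on $V$ containing the directed edge $(x,y)$ iff $\{x,y\}$ lies in a geodesic from some vertex of $V$ to $v_n$ and $\tau(x,v_n)\ge\tau(y,v_n)$. *)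

From HB Require Import structures.
From mathcomp Require Import all_boot all_order all_algebra.
From mathcomp Require Import all_classical all_reals all_analysis.
Unset Printing Implicit Defensive.
Import Order.TTheory GRing.Theory Num.Theory.
Local Open Scope classical_set_scope.
Local Open Scope ring_scope.

Definition pt := (int * int)%type.

Definition adj (x y : pt) : Prop := (absz (x.1 - y.1) + absz (x.2 - y.2) = 1)%N.

Fixpoint walk_in (A : set pt) (x : pt) (s : seq pt) : Prop :=
  match s with [::] => True | y :: s' => adj x y /\ A y /\ walk_in A y s' end.
Definition set_connected (A : set pt) : Prop :=
  forall x y, A x -> A y -> exists s, walk_in A x s /\ last x s = y.

(* ---------- dual lattice (Z^2 + (1/2,1/2)); dual vertex (a,b) stands for (a+1/2,b+1/2) ---- *)
(* the dual edge {d,d'} crosses the primal edge {p,q} iff their midpoints agree *)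
Definition crosses (d d' p q : pt) : Prop :=
  adj d d' /\ adj p q /\ p.1 + q.1 = d.1 + d'.1 + 1 /\ p.2 + q.2 = d.2 + d'.2 + 1.
Definition same_edge (p q p' q' : pt) : Prop :=
  (p = p' /\ q = q') \/ (p = q' /\ q = p').

(* (V, v) is as in the context: V infinite, connected, with infinite connected complement,
   and there is a doubly infinite self-avoiding dual path (f i)_{i in Z}, with dual edges
   e_i^* = {f i, f (i+1)} crossing primal edges e_i = {p i, q i}, such that V is a connected
   component of Z^2 with the edges e_i removed, and v i is an endpoint of e_i lying in V. *)
Definition setting (V : set pt) (v : int -> pt) : Prop :=
  [/\ infinite_set V, set_connected V, infinite_set (~` V), set_connected (~` V) &
   exists (f : int -> pt) (p q : int -> pt),
     [/\ injective f,
         (forall i, crosses (f i) (f (i + 1)) (p i) (q i)),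
         (forall x y, V x -> adj x y -> ~ (exists i, same_edge x y (p i) (q i)) -> V y),
         (forall x y, V x -> V y -> exists s,
            walk_in V x s /\ last x s = y /\
            forall k, (k < size s)%N ->
              ~ exists i, same_edge (nth x (x :: s) k) (nth x s k) (p i) (q i)) &
         (forall i, V (v i) /\ (v i = p i \/ v i = q i))]].

(* edge key (z, false) = {z, z + (1,0)},  (z, true) = {z, z + (0,1)} *)
Definition ekey_ends (k : pt * bool) : pt * pt :=
  (k.1, if k.2 then (k.1.1, k.1.2 + 1) else (k.1.1 + 1, k.1.2)).
Definition ekey (x y : pt) : pt * bool :=
  if y == (x.1 + 1, x.2) then (x, false)
  else if y == (x.1, x.2 + 1) then (x, true)
  else if x == (y.1 + 1, y.2) then (y, false)
  else (y, true).

Definition inE (V : set pt) (k : pt * bool) : Prop := V (ekey_ends k).1 /\ V (ekey_ends k).2.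
Definition Edge (V : set pt) := {k : pt * bool | inE V k}.

(* the weight of a lattice edge key (0 outside E; never used outside E) *)
Definition wt {R : realType} {V : set pt} (om : Edge V -> R) (k : pt * bool) : R :=
  match pselect (inE V k) with left h => om (exist _ k h) | right _ => 0 end.

(* ---------- sample space [0,oo)^E as a subset of R^E with the product sigma-algebra ---- *)
Definition RE (R : realType) (I : Type) := I -> R.
HB.instance Definition _ (R : realType) (I : Type) := gen_eqMixin (RE R I).
HB.instance Definition _ (R : realType) (I : Type) := gen_choiceMixin (RE R I).
HB.instance Definition _ (R : realType) (I : Type) :=
  isPointed.Build (RE R I) (fun _ => 0).
Definition coord_sets (R : realType) (I : Type) : set (set (RE R I)) :=
  \bigcup_(i in [set: I]) preimage_set_system [set: RE R I] (fun w => w i) measurable.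
Notation prodR R I := (g_sigma_algebraType (@coord_sets R I)).

Definition is_path (V : set pt) (x : pt) (s : seq pt) : Prop := V x /\ walk_in V x s.
Definition path_from_to (V : set pt) (x y : pt) (s : seq pt) : Prop :=
  is_path V x s /\ last x s = y.

Fixpoint ptime {R : realType} (w : pt * bool -> R) (x : pt) (s : seq pt) : R :=
  match s with [::] => 0 | y :: s' => w (ekey x y) + ptime w y s' end.

Definition tau {R : realType} (V : set pt) (om : Edge V -> R) (x y : pt) : R :=
  inf [set t | exists s, path_from_to V x y s /\ t = ptime (wt om) x s].

Definition geodesic {R : realType} (V : set pt) (om : Edge V -> R) (x y : pt) (s : seq pt)
  : Prop := path_from_to V x y s /\ ptime (wt om) x s = tau V om x y.

Definition path_uses (x : pt) (s : seq pt) (a b : pt) : Prop :=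
  ((a, b) \in zip (x :: s) s) \/ ((b, a) \in zip (x :: s) s).

Definition pedges (x : pt) (s : seq pt) : seq (pt * bool) :=
  [seq ekey e.1 e.2 | e <- zip (x :: s) s].

Definition admits_geodesics {R : realType} (V : set pt) (P : probability (prodR R (Edge V)) R)
  : Prop := forall x y, V x -> V y -> {ae P, forall om, exists s, geodesic V om x y s}.

Definition unique_passage_times {R : realType} (V : set pt)
  (P : probability (prodR R (Edge V)) R) : Prop :=
  {ae P, forall om : prodR R (Edge V), forall x s x' s',
     is_path V x s -> is_path V x' s' -> s <> [::] -> s' <> [::] ->
     uniq (x :: s) -> uniq (x' :: s') -> ~ (pedges x s =i pedges x' s') ->
     ptime (wt om) x s <> ptime (wt om) x' s'}.

Definition Gedge {R : realType} (V : set pt) (om : Edge V -> R) (z x y : pt) : Prop :=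
  (exists u s, V u /\ geodesic V om u z s /\ path_uses u s x y) /\
  tau V om y z <= tau V om x z.

Definition Gpath {R : realType} (V : set pt) (om : Edge V -> R) (z x : pt) (s : seq pt) : Prop :=
  V x /\ forall e, e \in zip (x :: s) s -> Gedge V om z e.1 e.2.

Definition Gcircuit {R : realType} (V : set pt) (om : Edge V -> R) (z x : pt) (s : seq pt)
  : Prop :=
  (3 <= size (x :: s))%N /\ uniq (x :: s) /\
  forall e, e \in zip (x :: s) (rcons s x) -> Gedge V om z e.1 e.2 \/ Gedge V om z e.2 e.1.

From HB Require Import structures.
From mathcomp Require Import all_boot all_order all_algebra.
From mathcomp Require Import all_classical all_reals all_analysis.
From mathcomp Require Import zify.
Set Implicit Arguments.
Unset Strict Implicit.
Import Order.TTheory GRing.Theory Num.Theory.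
Local Open Scope classical_set_scope.
Local Open Scope ring_scope.

(* Following a directed edge (x, y) of G_z costs exactly tau(x, z) - tau(y, z), so the
   passage time of a directed path in G_z telescopes to tau(x, z) - tau(y, z) <= tau(x, y):
   appending a geodesic to z makes it part of a geodesic to z, hence a geodesic itself.
   Under unique passage times every edge weight is positive (an edge {a, b} of weight 0
   next to an edge {b, q} gives two paths a-b-q and b-q of equal time), so geodesics are
   self-avoiding, tau(., z) strictly decreases along G_z, and two out-edges x -> y1,
   x -> y2 would give two distinct geodesics from x to z of equal time.  A circuit of G_z
   would have, at the vertex maximising tau(., z), two distinct out-edges. *)

Lemma mem_zip_l (S T : eqType) (s : seq S) (t : seq T) x y :
  (x, y) \in zip s t -> x \in s.
Proof.
by elim: s t => [|a s IH] [|b t] //=; rewrite !inE => /orP [/eqP [-> _]|/IH ->];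
  rewrite ?eqxx ?orbT.
Qed.

Lemma mem_zip_r (S T : eqType) (s : seq S) (t : seq T) x y :
  (x, y) \in zip s t -> y \in t.
Proof.
by elim: s t => [|a s IH] [|b t] //=; rewrite !inE => /orP [/eqP [_ ->]|/IH ->];
  rewrite ?eqxx ?orbT.
Qed.

Lemma mem_zip_splitr (T : eqType) (u a b : T) s : (a, b) \in zip (u :: s) s ->
  exists s1 s2, s = s1 ++ b :: s2 /\ last u s1 = a.
Proof.
elim: s u => [|y s IH] u //=; rewrite inE => /orP [/eqP [-> ->]|/IH [s1 [s2 [-> <-]]]].
  by exists [::], s.
by exists (y :: s1), s2.
Qed.

Lemma zip_rcons_l (S T : Type) (s : seq S) (t : seq T) x :
  size s = size t -> zip (rcons s x) t = zip s t.
Proof. by elim: s t => [|a s IH] [|b t] //= [/IH ->]. Qed.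

Lemma path_of_zip (T : eqType) (r : rel T) x t :
  (forall e, e \in zip (x :: t) t -> r e.1 e.2) -> path r x t.
Proof.
elim: t x => [|y t IH] x //= h; rewrite (h (x, y)) ?mem_head //=.
by apply: IH => e et; apply: h; rewrite inE et orbT.
Qed.

Lemma exists_argmax_seq (T : eqType) d (O : orderType d) (f : T -> O) (p : seq T) :
  p != [::] -> exists2 m, m \in p & forall y, y \in p -> (f y <= f m)%O.
Proof.
elim: p => [|x [|x' p] IH] // _.
  by exists x; rewrite ?mem_head // => y; rewrite inE => /eqP ->.
have [m mp hm] := IH isT.
have [hx|hx] := leP (f x) (f m).
- exists m => [|y]; first by rewrite inE mp orbT.
  by rewrite inE => /orP [/eqP ->|/hm].
- exists x => [|y]; first exact: mem_head.
  by rewrite inE => /orP [/eqP ->//|/hm/le_trans]; apply; apply: ltW.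
Qed.

Lemma next_neq_prev (T : eqType) (p : seq T) x : uniq p -> (3 <= size p)%N ->
  x \in p -> next p x != prev p x.
Proof.
move=> up sz xp; apply/eqP => e.
have nnx : next p (next p x) = x by rewrite e next_prev.
have [i s rs] := rot_to xp.
have us : uniq (x :: s) by rewrite -rs rot_uniq.
have := size_rot i p; rewrite rs => ss.
rewrite -!(next_rot i up) rs in nnx.
case: s rs us ss nnx => [|a [|b s]] rs us ss; try by rewrite -ss in sz.
move: us; rewrite /= !inE !negb_or => /andP [/andP [xa /andP [xb _]] /andP [/andP [ab _] _]].
rewrite /= eqxx eq_sym (negbTE xa) eqxx => bx.
by rewrite bx eqxx in xb.
Qed.

Lemma adj_cases (x y : pt) : adj x y ->
  [\/ y = (x.1 + 1, x.2), y = (x.1, x.2 + 1), x = (y.1 + 1, y.2) | x = (y.1, y.2 + 1)].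
Proof.
case: x y => [a b] [c d]; rewrite /adj /= => h.
have : (c = a + 1 /\ d = b) \/ (c = a /\ d = b + 1) \/
       (a = c + 1 /\ b = d) \/ (a = c /\ b = d + 1) by lia.
by case=> [[-> ->]|[[-> ->]|[[-> ->]|[-> ->]]]];
  [apply: Or41 | apply: Or42 | apply: Or43 | apply: Or44].
Qed.

Lemma adj_sym x y : adj x y -> adj y x.
Proof. by case: x y => [a b] [c d]; rewrite /adj /=; lia. Qed.

Lemma adj_neq x y : adj x y -> x <> y.
Proof. by case: x y => [a b] [c d]; rewrite /adj /= => h [e1 e2]; subst; lia. Qed.

Lemma ekey_endsK x y : adj x y ->
  ekey_ends (ekey x y) = (x, y) \/ ekey_ends (ekey x y) = (y, x).
Proof.
move=> xy; rewrite /ekey.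
case: ifP => [/eqP ->|h1]; first by left.
case: ifP => [/eqP ->|h2]; first by left.
case: ifP => [/eqP ->|h3]; first by right.
right; rewrite /ekey_ends /=.
by case: (adj_cases xy) => e; rewrite e ?eqxx in h1 h2 h3 *; case: (y).
Qed.

Lemma ekey_ends_inj : injective ekey_ends.
Proof.
by move=> [[a b] []] [[c d] []]; rewrite /ekey_ends /= => -[] e1 e2 e3 e4;
  subst => //; lia.
Qed.

Lemma ekey_ends_nswap k k' a b : ekey_ends k = (a, b) -> ekey_ends k' <> (b, a).
Proof.
by move: k k' => [[p q] []] [[r s] []]; rewrite /ekey_ends /= => -[<- <-] [] ? ?; lia.
Qed.

Lemma ekey_sym x y : adj x y -> ekey x y = ekey y x.
Proof.
move=> xy; have yx := adj_sym xy.
case: (ekey_endsK xy) => e1; case: (ekey_endsK yx) => e2;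
  try by apply: ekey_ends_inj; rewrite e1 e2.
all: by case: (ekey_ends_nswap e1 e2).
Qed.

Lemma ekey_inj x y a b : adj x y -> adj a b -> ekey x y = ekey a b ->
  (x = a /\ y = b) \/ (x = b /\ y = a).
Proof.
move=> xy ab /(congr1 ekey_ends).
by case: (ekey_endsK xy) => ->; case: (ekey_endsK ab) => -> [-> ->]; auto.
Qed.

Lemma walk_in_cat V x s1 s2 :
  walk_in V x (s1 ++ s2) <-> walk_in V x s1 /\ walk_in V (last x s1) s2.
Proof.
elim: s1 x => [|y s1 IH] x /=; first by split=> // -[].
by rewrite IH; split=> [[? [? []]]|[[? [? ?]] ?]].
Qed.

Lemma walk_in_last V x s : V x -> walk_in V x s -> V (last x s).
Proof. by elim: s x => [|y s IH] x //= _ [_ [Vy w]]; apply: IH. Qed.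

Lemma walk_in_step V u s a b : walk_in V u s -> (a, b) \in zip (u :: s) s ->
  [/\ adj a b, V b & (V u -> V a)].
Proof.
elim: s u => [|y s IH] u //= [uy [Vy w]]; rewrite inE => /orP [/eqP [-> ->]|/(IH _ w)] //.
by case=> ? ? ?; split=> // _; auto.
Qed.

Lemma walk_in_exit V (S : set pt) x s : walk_in V x s -> S x -> ~ S (last x s) ->
  exists p q, [/\ S p, ~ S q, adj p q & V q].
Proof.
elim: s x => [|y s IH] x /= ; first by move=> _ ? [].
move=> [xy [Vy w]] Sx nS; have [Sy|nSy] := pselect (S y); first exact: IH w Sy nS.
by exists x, y.
Qed.

Lemma ekey_notin_pedges V x y u s : adj x y -> walk_in V u s -> x \notin u :: s ->
  ekey x y \notin pedges u s.
Proof.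
move=> xy w xs; apply/mapP => -[[a b] /= ab e].
have [ab' _ _] := walk_in_step w ab.
have := mem_zip_l ab; have := mem_zip_r ab => bs ays.
by case: (ekey_inj xy ab' e) => -[ex _];
  move: xs; rewrite ex ?ays // inE bs orbT.
Qed.

Lemma ptime_cat (R : realType) (w : pt * bool -> R) x s1 s2 :
  ptime w x (s1 ++ s2) = ptime w x s1 + ptime w (last x s1) s2.
Proof. by elim: s1 x => [|y s1 IH] x /=; rewrite ?add0r // IH addrA. Qed.

Section Geodesics.
Variables (R : realType) (V : set pt) (om : Edge V -> R).
Hypothesis om_ge0 : forall e, 0 <= om e.

Lemma wt_ge0 k : 0 <= wt om k.
Proof. by rewrite /wt; case: pselect. Qed.

Lemma ptime_ge0 x s : 0 <= ptime (wt om) x s.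
Proof. by elim: s x => [|y s IH] x //=; rewrite addr_ge0 ?wt_ge0. Qed.

Lemma tau_le_ptime x y s : path_from_to V x y s -> tau V om x y <= ptime (wt om) x s.
Proof.
move=> p; apply: ge_inf; last by exists s.
by exists 0 => t [s' [_ ->]]; apply: ptime_ge0.
Qed.

Lemma geodesic_of_min x y s : path_from_to V x y s ->
  (forall s', path_from_to V x y s' -> ptime (wt om) x s <= ptime (wt om) x s') ->
  geodesic V om x y s.
Proof.
move=> p smin; split => //; apply/eqP; rewrite eq_le tau_le_ptime // andbT.
apply: lb_le_inf; first by exists (ptime (wt om) x s), s.
by move=> t [s' [p' ->]]; apply: smin.
Qed.

Lemma geodesic_le x y s s' : geodesic V om x y s -> path_from_to V x y s' ->
  ptime (wt om) x s <= ptime (wt om) x s'.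
Proof. by move=> [_ ->]; apply: tau_le_ptime. Qed.

Lemma geodesic_catr u z s1 s2 : geodesic V om u z (s1 ++ s2) ->
  geodesic V om (last u s1) z s2.
Proof.
move=> g; have [[[Vu /walk_in_cat [w1 w2]] l] _] := g.
rewrite last_cat in l.
apply: geodesic_of_min => [|s' [[_ w'] l']].
  by split; [split=> //; apply: walk_in_last|].
have p' : path_from_to V u z (s1 ++ s').
  by split; [split=> //; apply/walk_in_cat | rewrite last_cat].
by have := geodesic_le g p'; rewrite !ptime_cat lerD2l.
Qed.

Lemma geodesic_catl u z s1 s2 : geodesic V om u z (s1 ++ s2) ->
  geodesic V om u (last u s1) s1.
Proof.
move=> g; have [[[Vu /walk_in_cat [w1 w2]] l] _] := g.
apply: geodesic_of_min => // s' [[_ w'] l'].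
have p' : path_from_to V u z (s' ++ s2).
  by split; [split=> //; apply/walk_in_cat; rewrite l' | rewrite last_cat l' -last_cat].
by have := geodesic_le g p'; rewrite !ptime_cat l' lerD2r.
Qed.

Lemma tau_geodesic_step u z s a b : geodesic V om u z s ->
  (a, b) \in zip (u :: s) s -> tau V om a z = wt om (ekey a b) + tau V om b z.
Proof.
move=> g /mem_zip_splitr [s1 [s2 [es <-]]]; subst s.
have [_ <-] := geodesic_catr g.
have g' : geodesic V om u z (rcons s1 b ++ s2) by rewrite cat_rcons.
by have [_] := geodesic_catr g'; rewrite last_rcons => <-.
Qed.

Lemma Gedge_tau z a b : Gedge V om z a b ->
  [/\ adj a b, V a, V b & tau V om a z = wt om (ekey a b) + tau V om b z].
Proof.
move=> [[u [s [Vu [g uses]]]] le_ba]; have [[[_ w] _] _] := g.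
case: uses => [ab|ba].
  by have [? ? /(_ Vu) ?] := walk_in_step w ab; split=> //; apply: tau_geodesic_step g ab.
have [ba' Va /(_ Vu) Vb] := walk_in_step w ba.
have e := tau_geodesic_step g ba.
(* tau b = w + tau a on the geodesic, while tau b <= tau a in G_z: so w = 0 *)
have w0 : wt om (ekey b a) = 0.
  apply/eqP; rewrite eq_le wt_ge0 andbT.
  by rewrite -(lerD2r (tau V om a z)) -e add0r.
by split; [exact: adj_sym | | | rewrite e -(ekey_sym ba') w0 !add0r].
Qed.

Lemma Gpath_tau z x s : Gpath V om z x s ->
  is_path V x s /\ tau V om x z = ptime (wt om) x s + tau V om (last x s) z.
Proof.
elim: s x => [|y s IH] x [Vx G] /=; first by rewrite add0r.
have [xy _ Vy ->] := Gedge_tau (G (x, y) (mem_head _ _)).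
have [[_ w] ->] : is_path V y s /\
    tau V om y z = ptime (wt om) y s + tau V om (last y s) z.
  by apply: IH; split=> // e es; apply: G; rewrite inE es orbT.
by rewrite addrA.
Qed.

Section GeodesicGraph.
Variable z : pt.
Hypothesis geodesic_to_z : forall y, V y -> exists g, geodesic V om y z g.

Lemma Gpath_geodesic x s : Gpath V om z x s ->
  geodesic V om x (last x s) s /\
  exists u t, geodesic V om u z t /\ infix (x :: s) (u :: t).
Proof.
move=> G; have [[Vx w] e] := Gpath_tau G.
have [g [[[_ wg] lg] eg]] := geodesic_to_z (walk_in_last Vx w).
have sg : geodesic V om x z (s ++ g).
  split; first by split; [split=> //; apply/walk_in_cat | rewrite last_cat].
  by rewrite ptime_cat e eg.
split; first exact: geodesic_catl sg.
by exists x, (s ++ g); split=> //; apply: (prefix_infix (x :: s) g).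
Qed.

Lemma Gedge_geodesic x y : Gedge V om z x y -> exists g, geodesic V om x z (y :: g).
Proof.
move=> G; have [xy Vx Vy e] := Gedge_tau G.
have [g [[[_ wg] lg] eg]] := geodesic_to_z Vy.
by exists g; split; [split | rewrite /= eg e].
Qed.

Lemma Gedge_exists x : V x -> x <> z -> exists y, Gedge V om z x y.
Proof.
move=> Vx xz; have [[|y g] g_geo] := geodesic_to_z Vx.
  by case: g_geo => -[_ l]; case: xz.
exists y; split; first by exists x, (y :: g); do 2!split=> //; left; rewrite inE eqxx.
have [_ <-] := geodesic_catr (g_geo : geodesic V om x z ([:: y] ++ g)).
by case: g_geo => _ <-; rewrite /= lerDr wt_ge0.
Qed.

End GeodesicGraph.

Section PositiveWeights.
Hypothesis wt_gt0 : forall a b, V a -> V b -> adj a b -> 0 < wt om (ekey a b).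

Lemma ptime_gt0 x s : V x -> walk_in V x s -> s != [::] -> 0 < ptime (wt om) x s.
Proof. by case: s => [|y s] //= Vx [xy [Vy _]] _; rewrite ltr_wpDr ?ptime_ge0 ?wt_gt0. Qed.

Lemma walk_in_shorten x s : V x -> walk_in V x s -> ~~ uniq (x :: s) ->
  exists s', [/\ walk_in V x s', last x s' = last x s &
                 ptime (wt om) x s' < ptime (wt om) x s].
Proof.
elim: s x => [|y s IH] x // Vx w; rewrite [uniq _]/= negb_and negbK => /orP [xs|nu].
  move: w; case/path.splitP: _ / xs => s1 s2 /walk_in_cat [w1 w2].
  rewrite last_rcons in w2; exists s2; split; rewrite ?last_cat ?last_rcons //.
  by rewrite ptime_cat last_rcons ltrDr ptime_gt0 //; case: (s1).
case: w => [xy [Vy w]]; have [s' [w' l' lt']] := IH y Vy w nu.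
by exists (y :: s'); split=> //=; rewrite ltrD2l.
Qed.

Lemma geodesic_uniq x y s : geodesic V om x y s -> uniq (x :: s).
Proof.
move=> g; have [[[Vx w] l] _] := g; apply: contraT => nu.
have [s' [w' l' lt']] := walk_in_shorten Vx w nu.
have p' : path_from_to V x y s' by split; [|rewrite l'].
by have := geodesic_le g p'; rewrite leNgt lt'.
Qed.

Lemma Gedge_tau_lt z a b : Gedge V om z a b -> tau V om b z < tau V om a z.
Proof. by move=> /Gedge_tau [ab Va Vb ->]; rewrite ltrDr wt_gt0. Qed.

End PositiveWeights.

Definition unique_ptimes : Prop :=
  forall x s x' s',
     is_path V x s -> is_path V x' s' -> s <> [::] -> s' <> [::] ->
     uniq (x :: s) -> uniq (x' :: s') -> ~ (pedges x s =i pedges x' s') ->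
     ptime (wt om) x s <> ptime (wt om) x' s'.

Section UniquePassageTimes.
Hypothesis om_unique : unique_ptimes.

Lemma wt_ekey_neq0 a b q : V a -> V b -> V q -> adj a b -> adj b q -> a <> q ->
  wt om (ekey a b) <> 0.
Proof.
move=> Va Vb Vq ab bq aq w0.
have /eqP a_b := adj_neq ab; have /eqP b_q := adj_neq bq; have /eqP a_q := aq.
apply: (om_unique (x := a) (s := [:: b; q]) (x' := b) (s' := [:: q])) => //.
- by rewrite /= !inE negb_or a_b a_q b_q.
- by rewrite /= !inE b_q.
- move=> /(_ (ekey a b)); rewrite /pedges /= !inE eqxx /= => /esym/eqP.
  by case/(ekey_inj ab bq) => -[ea eb]; [move: a_b; rewrite ea eb eqxx|].
- by rewrite /= w0 add0r.
Qed.

Lemma unique_ptimes_wt_gt0 : infinite_set V -> set_connected V ->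
  forall a b, V a -> V b -> adj a b -> 0 < wt om (ekey a b).
Proof.
move=> Vinf Vconn a b Va Vb ab; rewrite lt_neqAle wt_ge0 andbT eq_sym.
apply/eqP; have [c [Vc /not_orP [ca cb]]] :=
  infinite_setN0 (infinite_setD Vinf (finite_set2 a b)).
have [s [w l]] := Vconn a c Va Vc.
have nS_c : ~ [set a; b] (last a s) by rewrite l => -[/ca|/cb].
have [p [q [[->|->] /not_orP [qa qb] pq Vq]]] := walk_in_exit w (or_introl erefl) nS_c.
- by rewrite (ekey_sym ab); apply: (wt_ekey_neq0 Vb Va Vq (adj_sym ab) pq (nesym qb)).
- exact: (wt_ekey_neq0 Va Vb Vq ab pq (nesym qa)).
Qed.

Hypothesis wt_pos : forall a b, V a -> V b -> adj a b -> 0 < wt om (ekey a b).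
Variable z : pt.
Hypothesis geodesic_to_z : forall y, V y -> exists g, geodesic V om y z g.

Lemma Gedge_unique x y1 y2 : Gedge V om z x y1 -> Gedge V om z x y2 -> y1 = y2.
Proof.
move=> G1 G2; have [xy1 _ _ _] := Gedge_tau G1; have [xy2 _ _ _] := Gedge_tau G2.
have [g1 g1_geo] := Gedge_geodesic geodesic_to_z G1.
have [g2 g2_geo] := Gedge_geodesic geodesic_to_z G2.
have u1 := geodesic_uniq wt_pos g1_geo; have u2 := geodesic_uniq wt_pos g2_geo.
have x_notin : x \notin y2 :: g2 by case/andP: u2.
have [[p1 _] t1] := g1_geo; have [[p2 _] t2] := g2_geo.
case: (eqVneq y1 y2) => // y12; exfalso.
apply: (om_unique p1 p2) => //; last by rewrite t1 t2.
move=> /(_ (ekey x y1)); rewrite /pedges /= !inE eqxx /= => /esym/orP [/eqP|].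
  case/(ekey_inj xy1 xy2) => -[_ ey]; first by move: y12; rewrite ey eqxx.
  exact: adj_neq xy1 (esym ey).
by move=> k_in; have := ekey_notin_pedges xy1 p2.2.2.2 x_notin; rewrite k_in.
Qed.

Lemma Gcircuit_free x s : ~ Gcircuit V om z x s.
Proof.
move=> [sz [u G]].
pose r a b := `[< Gedge V om z a b \/ Gedge V om z b a >].
have cyc : cycle r (x :: s).
  apply: path_of_zip => e.
  by rewrite -[x :: rcons s x]/(rcons (x :: s) x) zip_rcons_l ?size_rcons // => /G /asboolP.
(* at a vertex of maximal tau(., z) both circuit edges point away from it *)
have [m mp mmax] := exists_argmax_seq (fun y => tau V om y z) (isT : x :: s != [::]).
have out_edge y : r m y \/ r y m -> y \in x :: s -> Gedge V om z m y.
  move=> [] /asboolP [] // G' ys; have := Gedge_tau_lt wt_pos G';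
  by rewrite ltNge mmax.
have Gn : Gedge V om z m (next (x :: s) m).
  by apply: out_edge; [left; exact: next_cycle | rewrite mem_next].
have Gp : Gedge V om z m (prev (x :: s) m).
  by apply: out_edge; [right; exact: prev_cycle | rewrite mem_prev].
by have /eqP := next_neq_prev u sz mp; apply; apply: Gedge_unique Gn Gp.
Qed.

End UniquePassageTimes.

End Geodesics.

Lemma ae_forall_countable d (T : sigmaRingType d) (R : realType)
    (mu : {measure set T -> \bar R}) (I : countType) (P : I -> T -> Prop) :
  (forall i, {ae mu, forall x, P i x}) -> {ae mu, forall x, forall i, P i x}.
Proof.
move=> aeP.
have : {ae mu, forall x, forall k : nat,
    if unpickle k is Some i then P i x else True}.
  by apply: ae_foralln => k; case: (unpickle k) => [i|]; [exact: aeP | exact: aeW].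
by apply: filterS => x Px i; have := Px (pickle i); rewrite pickleK.
Qed.

Theorem proposition3p1 (R : realType) (V : set pt) (v : int -> pt)
  (P : probability (prodR R (Edge V)) R) (n : int) :
  setting V v ->
  (* P is a Borel probability on [0,oo)^E *)
  {ae P, forall om : prodR R (Edge V), forall e, 0 <= om e} ->
  admits_geodesics V P ->
  (* (1) *)
  {ae P, forall om : prodR R (Edge V), forall x s,
     Gpath V om (v n) x s ->
     geodesic V om x (last x s) s /\
     exists u t, geodesic V om u (v n) t /\ infix (x :: s) (u :: t)} /\
  (* (2) *)
  (unique_passage_times V P ->
   {ae P, forall om : prodR R (Edge V),
      (forall x, V x -> x <> v n -> exists! y, Gedge V om (v n) x y) /\
      (forall x s, ~ Gcircuit V om (v n) x s)}).
Proof.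
move=> [Vinf Vconn _ _ cut] om_ge0 geo.
have Vz : V (v n) by case: cut => [f [p [q [_ _ _ _ /(_ n) []]]]].
have ae_filter : Filter (almost_everywhere P) := ae_filter_ringOfSetsType P.
have geo_z : {ae P, forall om : prodR R (Edge V),
    forall y : pt, V y -> exists g, geodesic V om y (v n) g}.
  apply: ae_forall_countable => y; have [Vy|nVy] := pselect (V y).
    by move: (geo y (v n) Vy Vz); apply: filterS => om g _.
  by apply: aeW => om /nVy.
split; first by apply: filterS2 om_ge0 geo_z => om ge0 g x s; apply: Gpath_geodesic.
move=> upt; apply: filterS3 om_ge0 geo_z upt => om ge0 g U.
have pos := unique_ptimes_wt_gt0 ge0 U Vinf Vconn.
split=> [x Vx xz|]; last exact: Gcircuit_free.
have [y G] := Gedge_exists ge0 g Vx xz.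
by exists y; split=> // y'; apply: Gedge_unique.
Qed.
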